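(* A commutative ring $R$ is locally stable if and only if the formal power series ring $R[[X]]$ is locally stable.
   Context: All rings are commutative with identity. A ring $S$ has stable range 1 if whenever $aS+bS=S$ there is $y\in S$ with $a+by$ a unit. $S$ is locally stable if whenever $a,b\in S$ with $aS+bS=S$ there is $y\in S$ such that $S/(a+by)S$ has stable range 1. *)

From mathcomp Require Import all_boot all_algebra.
Set Implicit Arguments. Unset Strict Implicit. Unset Printing Implicit Defensive.
Import GRing.Theory.
Local Open Scope ring_scope.

(* Generic notions, stated for a commutative ring presented by its addition,
   multiplication and identity (so that they apply both to a comNzRingType R and
   to the formal power series ring R[[X]] built below). *)
Section Generic.
Variables (T : Type) (add mul : T -> T -> T) (one : T).

Definition congr_mod (c x y : T) : Prop := exists t, x = add y (mul c t).

(* S/cS has stable range 1: whenever abar*Sbar + bbar*Sbar = Sbar, there is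
   y with abar + bbar*ybar a unit of Sbar. *)
Definition sr1_quot (c : T) : Prop :=
  forall a b : T,
    (exists u v, congr_mod c (add (mul a u) (mul b v)) one) ->
    exists y w, congr_mod c (mul (add a (mul b y)) w) one.

Definition locally_stable_gen : Prop :=
  forall a b : T,
    (exists u v, add (mul a u) (mul b v) = one) ->
    exists y, sr1_quot (add a (mul b y)).
End Generic.

Definition locally_stable (R : comNzRingType) : Prop :=
  @locally_stable_gen R (@GRing.add R) (@GRing.mul R) 1.

Definition fps (R : comNzRingType) := nat -> R.
Definition fps_add (R : comNzRingType) (f g : fps R) : fps R := fun n => f n + g n.
Definition fps_mul (R : comNzRingType) (f g : fps R) : fps R :=
  fun n => \sum_(i < n.+1) f i * g (n - i)%N.
Definition fps_one (R : comNzRingType) : fps R := fun n => (n == 0%N)%:R.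

Definition fps_locally_stable (R : comNzRingType) : Prop :=
  @locally_stable_gen (fps R) (@fps_add R) (@fps_mul R) (fps_one R).

From HB Require Import structures.
From mathcomp Require Import all_boot all_algebra.
From mathcomp Require Import boolp.
From mathcomp Require Import ring zify.
Set Implicit Arguments. Unset Strict Implicit. Unset Printing Implicit Defensive.
Import GRing.Theory.
Local Open Scope ring_scope.

(* R[[X]] retracts onto R through the constant term, and the kernel XR[[X]]
   of this retraction lies in the Jacobson radical: a series with constant
   term 1 is invertible. Hence x is a unit modulo cR[[X]] exactly when x(0) is
   a unit modulo c(0)R, so comaximality modulo c and stable range 1 of
   R[[X]]/cR[[X]] are both read off constant terms, and the witnesses required
   by local stability can be carried along the retraction and its section. *)

Definition unit_mod (T : comNzRingType) (c x : T) : Prop :=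
  exists w : T, congr_mod +%R *%R c (x * w) 1.

Definition comax_mod (T : comNzRingType) (c a b : T) : Prop :=
  exists u v : T, congr_mod +%R *%R c (a * u + b * v) 1.

Lemma sr1_quotE (T : comNzRingType) (c : T) :
  sr1_quot +%R *%R 1 c <->
  (forall a b, comax_mod c a b -> exists y, unit_mod c (a + b * y)).
Proof. by split=> h a b /h [y [w hw]]; exists y, w. Qed.

Section Morphism.
Variables (T T' : comNzRingType) (f : {rmorphism T -> T'}).

Lemma rmorph_congr_mod (c x y : T) :
  congr_mod +%R *%R c x y -> congr_mod +%R *%R (f c) (f x) (f y).
Proof. by move=> [t ->]; exists (f t); rewrite rmorphD rmorphM. Qed.

Lemma rmorph_unit_mod (c x : T) : unit_mod c x -> unit_mod (f c) (f x).
Proof.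
by move=> [w /rmorph_congr_mod]; rewrite rmorphM rmorph1; exists (f w).
Qed.

Lemma rmorph_comax_mod (c a b : T) : comax_mod c a b -> comax_mod (f c) (f a) (f b).
Proof.
move=> [u [v /rmorph_congr_mod]]; rewrite rmorphD !rmorphM rmorph1.
by exists (f u), (f v).
Qed.

Lemma rmorph_comaximal (a b : T) :
  (exists u v, a * u + b * v = 1) -> exists u v, f a * u + f b * v = 1.
Proof. by move=> [u [v h]]; exists (f u), (f v); rewrite -!rmorphM -rmorphD h rmorph1. Qed.

End Morphism.

Section Retraction.
Variables (T T' : comNzRingType).
Variables (pi : {rmorphism T -> T'}) (sigma : {rmorphism T' -> T}).
Hypothesis pi_sigma : cancel sigma pi.
(* This holds as soon as ker pi lies in the Jacobson radical of T. *)
Hypothesis unit_mod_reflect : forall c x, unit_mod (pi c) (pi x) -> unit_mod c x.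

Lemma comax_mod_reflect (c a b : T) :
  comax_mod (pi c) (pi a) (pi b) -> comax_mod c a b.
Proof.
move=> [u [v h]].
have [w [t hw]] : unit_mod c (a * sigma u + b * sigma v).
  apply: unit_mod_reflect; exists 1.
  by rewrite mulr1 rmorphD !rmorphM !pi_sigma.
by exists (sigma u * w), (sigma v * w), t; rewrite -hw; ring.
Qed.

Lemma sr1_quot_retract (c : T) :
  sr1_quot +%R *%R 1 c <-> sr1_quot +%R *%R 1 (pi c).
Proof.
rewrite !sr1_quotE; split=> hS a b hab.
  have /hS [y hy] : comax_mod c (sigma a) (sigma b).
    by apply: comax_mod_reflect; rewrite !pi_sigma.
  exists (pi y); move: (rmorph_unit_mod pi hy).
  by rewrite rmorphD rmorphM !pi_sigma.
have [y hy] := hS _ _ (rmorph_comax_mod pi hab).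
exists (sigma y); apply: unit_mod_reflect.
by rewrite rmorphD rmorphM pi_sigma.
Qed.

Lemma locally_stable_retract : locally_stable T <-> locally_stable T'.
Proof.
split=> hS a b hab.
  have /hS [y hy] := rmorph_comaximal sigma hab.
  exists (pi y); move: hy; rewrite sr1_quot_retract.
  by rewrite rmorphD rmorphM !pi_sigma.
have [y hy] := hS _ _ (rmorph_comaximal pi hab).
exists (sigma y); rewrite sr1_quot_retract.
by rewrite rmorphD rmorphM pi_sigma.
Qed.

End Retraction.

Section PowerSeries.
Variable R : comNzRingType.
Local Notation S := (fps R).

HB.instance Definition _ := gen_eqMixin S.
HB.instance Definition _ := gen_choiceMixin S.

Lemma fps_addA : associative (@fps_add R).
Proof. by move=> f g h; apply: funext => n; rewrite /fps_add addrA. Qed.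

Lemma fps_addC : commutative (@fps_add R).
Proof. by move=> f g; apply: funext => n; rewrite /fps_add addrC. Qed.

Lemma fps_add0 : left_id (fun _ => 0) (@fps_add R).
Proof. by move=> f; apply: funext => n; rewrite /fps_add add0r. Qed.

Lemma fps_addN : left_inverse (fun _ => 0) (fun f n => - f n) (@fps_add R).
Proof. by move=> f; apply: funext => n; rewrite /fps_add addNr. Qed.

HB.instance Definition _ := GRing.isZmodule.Build S fps_addA fps_addC fps_add0 fps_addN.

(* Coefficients of a product up to degree N only involve the factors up to
   degree N, so the multiplicative ring axioms are inherited from {poly R}. *)
Definition fps_trunc (N : nat) (f : S) : {poly R} := \poly_(i < N.+1) f i.

Lemma coef_fps_trunc N f i : (i <= N)%N -> (fps_trunc N f)`_i = f i.
Proof. by move=> hi; rewrite coef_poly ltnS hi. Qed.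

Lemma fps_mul_trunc (f g : S) n N :
  (n <= N)%N -> fps_mul f g n = (fps_trunc N f * fps_trunc N g)`_n.
Proof.
move=> hn; rewrite coefM; apply: eq_bigr => i _; have hi := ltn_ord i.
by rewrite !coef_fps_trunc //; lia.
Qed.

Lemma coefM_eq_r (p q q' : {poly R}) n :
  (forall i, (i <= n)%N -> q`_i = q'`_i) -> (p * q)`_n = (p * q')`_n.
Proof. by move=> h; rewrite !coefM; apply: eq_bigr => i _; rewrite h ?leq_subr. Qed.

Lemma fps_mulA : associative (@fps_mul R).
Proof.
move=> f g h; apply: funext => n; rewrite !(fps_mul_trunc _ _ (leqnn n)).
transitivity ((fps_trunc n f * (fps_trunc n g * fps_trunc n h))`_n).
  by apply: coefM_eq_r => i hi; rewrite coef_fps_trunc // (fps_mul_trunc _ _ hi).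
rewrite mulrA !(mulrC _ (fps_trunc n h)); apply: coefM_eq_r => i hi.
by rewrite coef_fps_trunc // (fps_mul_trunc _ _ hi).
Qed.

Lemma fps_mulC : commutative (@fps_mul R).
Proof. by move=> f g; apply: funext => n; rewrite !(fps_mul_trunc _ _ (leqnn n)) mulrC. Qed.

Lemma fps_trunc_one n : fps_trunc n (fps_one R) = 1.
Proof. by apply/polyP => -[|i]; rewrite coef_poly coef1 //=; case: ifP. Qed.

Lemma fps_mul1 : left_id (fps_one R) (@fps_mul R).
Proof.
move=> f; apply: funext => n.
by rewrite (fps_mul_trunc _ _ (leqnn n)) fps_trunc_one mul1r coef_fps_trunc.
Qed.

Lemma fps_mulDl : left_distributive (@fps_mul R) (@fps_add R).
Proof.
move=> f g h; apply: funext => n; rewrite /fps_add /fps_mul -big_split.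
by apply: eq_bigr => i _; rewrite mulrDl.
Qed.

Lemma fps_one_neq0 : fps_one R != 0.
Proof. by apply/eqP => /(congr1 (fun f : S => f 0%N)) /eqP; rewrite oner_eq0. Qed.

HB.instance Definition _ :=
  GRing.Zmodule_isComNzRing.Build S fps_mulA fps_mulC fps_mul1 fps_mulDl fps_one_neq0.

Lemma coef_fps_mul (f g : S) n : (f * g) n = \sum_(i < n.+1) f i * g (n - i)%N.
Proof. by []. Qed.

Definition fps_coef0 (f : S) : R := f 0%N.

Lemma fps_coef0_is_zmod_morphism : zmod_morphism fps_coef0.
Proof. by []. Qed.

Lemma fps_coef0_is_monoid_morphism : monoid_morphism fps_coef0.
Proof. by split=> // f g; rewrite /fps_coef0 coef_fps_mul big_ord1. Qed.

HB.instance Definition _ := GRing.isZmodMorphism.Build S R fps_coef0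
  fps_coef0_is_zmod_morphism.
HB.instance Definition _ := GRing.isMonoidMorphism.Build S R fps_coef0
  fps_coef0_is_monoid_morphism.

Definition fps_const (r : R) : S := fun n => if n == 0%N then r else 0.

Lemma fps_constK : cancel fps_const fps_coef0.
Proof. by []. Qed.

Lemma fps_const_is_zmod_morphism : zmod_morphism fps_const.
Proof. by move=> a b; apply: funext => -[|n] //; exact: (esym (subr0 0)). Qed.

Lemma fps_const_is_monoid_morphism : monoid_morphism fps_const.
Proof.
split; first by apply: funext => -[].
move=> a b; apply: funext => n; rewrite coef_fps_mul big_ord_recl big1 ?addr0.
  by rewrite subn0; case: n => [|n] /=; rewrite ?mulr0.
by move=> i _; rewrite mul0r.
Qed.

HB.instance Definition _ := GRing.isZmodMorphism.Build R S fps_const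
  fps_const_is_zmod_morphism.
HB.instance Definition _ := GRing.isMonoidMorphism.Build R S fps_const
  fps_const_is_monoid_morphism.

Section Inverse.
Variable f : S.
Hypothesis f0 : f 0%N = 1.

(* For k <= m, [inv_approx m k] is the k-th coefficient of the inverse of f,
   obtained from g_(m+1) = - sum_(i <= m) f_(i+1) g_(m-i). *)
Fixpoint inv_approx (m : nat) : nat -> R :=
  if m is m'.+1 then
    fun k => if (k <= m')%N then inv_approx m' k
             else - \sum_(i < m'.+1) f i.+1 * inv_approx m' (m' - i)
  else fun _ => 1.

Lemma inv_approx_stable m n k : (k <= n <= m)%N -> inv_approx m k = inv_approx n k.
Proof.
elim: m => [|m IH] /andP[hk hn]; first by have -> : n = 0%N by lia.
case: (ltngtP n m.+1) => [h||->] //; last by lia.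
by rewrite /= ifT; [apply: IH; lia | lia].
Qed.

Definition fps_inv : S := fun k => inv_approx k k.

Lemma fps_mul_inv : f * fps_inv = 1.
Proof.
apply: funext => -[|n]; first by rewrite coef_fps_mul big_ord1 f0 mul1r.
rewrite coef_fps_mul big_ord_recl f0 mul1r /fps_inv /= ltnn.
rewrite [X in _ + X](eq_bigr (fun i : 'I_n.+1 => f i.+1 * inv_approx n (n - i))).
  by rewrite addNr.
move=> i _; rewrite /bump /= add1n subSS; congr (_ * _).
by symmetry; apply: inv_approx_stable; rewrite leqnn leq_subr.
Qed.

End Inverse.

Lemma fps_unit_mod_reflect (c x : S) :
  unit_mod (fps_coef0 c) (fps_coef0 x) -> unit_mod c x.
Proof.
move=> [w [t hw]].
pose e := x * fps_const w - c * fps_const t.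
have e0 : fps_coef0 e = 1.
  by rewrite rmorphB !rmorphM /= !fps_constK hw; ring.
exists (fps_const w * fps_inv e), (fps_const t * fps_inv e).
by rewrite -(fps_mul_inv e0) /e; ring.
Qed.

End PowerSeries.

Theorem corollary2p6 (R : comNzRingType) :
  locally_stable R <-> fps_locally_stable R.
Proof.
symmetry; exact: (locally_stable_retract (@fps_constK R) (@fps_unit_mod_reflect R)).
Qed.
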